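(* There is an algorithm which, given a Lyndon word $y$ of length $n\ge 2$ over an arbitrary totally ordered alphabet, accessing the letters of $y$ only through pairwise letter comparisons, outputs the prefix standard permutation of $y$, i.e. the list of positions $j\in\{0,\dots,n-2\}$ sorted so that the corresponding prefixes $y[0\,..\,j]$ are in strictly increasing order for the infinite ordering $\prec$, and runs in time $O(n)$.
   Context: Words are finite sequences $y=y[0]\cdots y[n-1]$ over a totally ordered alphabet; $y[0\,..\,j]$ is the prefix of length $j+1$. Lexicographic order $<$: $u<v$ if $u$ is a proper prefix of $v$, or $u=ras$, $v=rbt$ with $a<b$ letters; it extends to infinite words. A Lyndon word is a non-empty word strictly smaller than each of its proper non-empty suffixes. Infinite ordering: for non-empty words $u,v$, $u\prec v$ iff $u^\infty<v^\infty$, or $u^\infty=v^\infty$ and $|u|>|v|$, where $u^\infty=uuu\cdots$. This is a strict total order on non-empty words. *)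

From mathcomp Require Import all_boot all_order.
Set Implicit Arguments. Unset Strict Implicit. Unset Printing Implicit Defensive.
Import Order.TTheory.

Section Words.
Context {d : Order.disp_t} {T : orderType d}.

Definition lexlt (u v : seq T) : Prop :=
  (exists w, w <> [::] /\ v = u ++ w) \/
  (exists r a b s t, u = r ++ a :: s /\ v = r ++ b :: t /\ (a < b)%O).

Definition lyndon (u : seq T) : Prop :=
  u <> [::] /\ forall k, 0 < k < size u -> lexlt u (drop k u).

Definition streamlt (a b : nat -> T) : Prop :=
  exists k, (forall i, i < k -> a i = b i) /\ (a k < b k)%O.

(* u^oo as a stream, for non-empty u = x :: _ (x is only a default). *)
Definition pow_inf (x : T) (u : seq T) : nat -> T :=
  fun i => nth x u (i %% size u).

Definition prec (u v : seq T) : Prop :=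
  match u, v with
  | x :: _, z :: _ =>
      streamlt (pow_inf x u) (pow_inf z v) \/
      ((forall i, pow_inf x u i = pow_inf z v i) /\ size v < size u)
  | _, _ => False
  end.

Definition prefix_std_perm (y : seq T) (p : seq nat) : Prop :=
  perm_eq p (iota 0 (size y).-1) /\
  forall i, i.+1 < size p ->
    prec (take (nth 0 p i).+1 y) (take (nth 0 p i.+1).+1 y).

End Words.

(* A comparison-based unit-cost RAM.                                   *)
(* Registers R[0..] and memory M[0..] hold naturals (all initially 0,   *)
(* except R[0] = n = |y|).  The input word is accessible only through   *)
(* the letter-comparison instruction ICmp.  Each executed instruction   *)
(* costs one time unit.  On halting, the output is M[0], ..., M[n-2].   *)

Inductive instr : Type :=
| IConst (r c : nat)
| IAdd   (r a b : nat)
| ISub   (r a b : nat)          (* R[r] := R[a] - R[b] (truncated)    *)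
| ILoad  (r a : nat)
| IStore (a r : nat)
| IJmp   (t : nat)
| IJlt   (a b t : nat)
| ICmp   (r a b : nat)          (* R[r] := 0,1,2 as y[R[a]] <,=,> y[R[b]];
                                   crashes if an index is >= n        *)
| IHalt.

Definition program := seq instr.

Record state := State { pc : nat; reg : nat -> nat; mem : nat -> nat }.

Definition upd (f : nat -> nat) (k v : nat) : nat -> nat :=
  fun i => if i == k then v else f i.

Definition init_state (n : nat) : state :=
  State 0 (upd (fun _ => 0) 0 n) (fun _ => 0).

Definition halted (P : program) (s : state) : Prop :=
  nth IHalt P (pc s) = IHalt /\ pc s < size P.

Section Exec.
Context {d : Order.disp_t} {T : orderType d}.

Definition cmp_letters (y : seq T) (i j : nat) : option nat :=
  match onth y i, onth y j with
  | Some a, Some b => Some (if (a < b)%O then 0 else if a == b then 1 else 2)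
  | _, _ => None
  end.

Definition step (P : program) (y : seq T) (s : state) : option state :=
  let R := reg s in let M := mem s in let nx := (pc s).+1 in
  if size P <= pc s then None else
  match nth IHalt P (pc s) with
  | IConst r c => Some (State nx (upd R r c) M)
  | IAdd r a b => Some (State nx (upd R r (R a + R b)) M)
  | ISub r a b => Some (State nx (upd R r (R a - R b)) M)
  | ILoad r a => Some (State nx (upd R r (M (R a))) M)
  | IStore a r => Some (State nx R (upd M (R a) (R r)))
  | IJmp t => Some (State t R M)
  | IJlt a b t => Some (State (if R a < R b then t else nx) R M)
  | ICmp r a b =>
      match cmp_letters y (R a) (R b) with
      | Some c => Some (State nx (upd R r c) M)
      | None => None
      end
  | IHalt => None
  end.

Fixpoint run (P : program) (y : seq T) (t : nat) : option state :=
  match t with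
  | 0 => Some (init_state (size y))
  | t'.+1 => match run P y t' with
             | Some s => step P y s
             | None => None
             end
  end.

Definition output (y : seq T) (s : state) : seq nat :=
  mkseq (mem s) (size y).-1.

End Exec.

From Pilot Require Import Defs.
From mathcomp Require Import all_boot all_order.
From mathcomp Require Import zify.
Set Implicit Arguments. Unset Strict Implicit. Unset Printing Implicit Defensive.
Import Order.TTheory.

(* For a Lyndon word y of length n and 0 < m < n, let lcp m be the length of
   the longest common prefix of y[m..] and y, and brk m = m + lcp m the first
   position where y[m..] deviates from y (it exists since Lyndon words are
   unbordered).  The prefix y[0..m) satisfies (y[0..m))^oo = y below brk m and
   is smaller than y at brk m.  Hence the prefixes of lengths a, b compare by
   brk first, and among equal breaks the longer prefix is smaller
   (emitted_before).

   The algorithm scans i = 1 .. n-1 keeping a stack of the lengths m <= i whose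
   break is not yet passed; since breaks are nested, a single letter
   comparison y[i] vs y[i - top] decides whether the top has its break at i,
   in which case it is popped and emitted.  Lengths are thus emitted in
   emission order, and each length is pushed and popped once: O(n) steps. *)

Section Streams.
Context {d : Order.disp_t} {T : orderType d}.

Lemma streamlt_via (u v w : nat -> T) K :
  (forall i, i < K -> u i = w i) -> (u K < w K)%O ->
  (forall i, i <= K -> v i = w i) -> streamlt u v.
Proof.
move=> Huw Hlt Hvw; exists K; split; last by rewrite Hvw.
by move=> i Hi; rewrite Huw // Hvw // ltnW.
Qed.

Definition cyc (x0 : T) (y : seq T) (m : nat) : nat -> T :=
  fun i => nth x0 y (i %% m).

Lemma prec_take x0 (y : seq T) m m' : 0 < m <= size y -> 0 < m' <= size y ->
  streamlt (cyc x0 y m) (cyc x0 y m') \/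
  ((forall i, cyc x0 y m i = cyc x0 y m' i) /\ m' < m) ->
  prec (take m y) (take m' y).
Proof.
have pow_take z p : 0 < p <= size y -> pow_inf z (take p y) =1 cyc x0 y p.
  move=> Hp i; rewrite /pow_inf /cyc size_take_min (minn_idPl (proj2 (andP Hp))).
  have Hi : i %% p < p by rewrite ltn_mod; case/andP: Hp.
  by rewrite nth_take //; apply: set_nth_default; lia.
move=> Hm Hm'.
have Sm : size (take m y) = m by rewrite size_takel //; case/andP: Hm.
have Sm' : size (take m' y) = m' by rewrite size_takel //; case/andP: Hm'.
rewrite /prec; case E: (take m y) => [|a u]; first by move: Sm; rewrite E /=; lia.
case E': (take m' y) => [|b v]; first by move: Sm'; rewrite E' /=; lia.
rewrite -E -E' Sm Sm'.
case=> [[K [HK1 HK2]]|[HK1 HK2]]; [left; exists K; split|right; split] => //.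
- by move=> i Hi; rewrite !pow_take // HK1.
- by rewrite !pow_take.
- by move=> i; rewrite !pow_take.
Qed.

End Streams.

Section LyndonPrefixes.
Context {d : Order.disp_t} {T : orderType d}.
Variables (x0 : T) (y : seq T).
Hypothesis y_lyndon : lyndon y.
Local Notation n := (size y).
Local Notation "y .[ i ]" := (nth x0 y i).

(* A proper shift y[dd..] of a Lyndon word is lexicographically larger, so at
   its first mismatch against y the shifted letter is the larger one. *)
Lemma lyndon_shift_lt dd e : 0 < dd < n -> dd + e < n ->
  (forall j, j < e -> y.[dd + j] = y.[j]) -> y.[dd + e] != y.[e] ->
  (y.[e] < y.[dd + e])%O.
Proof.
move=> Hd He Hm Hne; have [_ /(_ dd Hd)] := y_lyndon.
case=> [[w [_ Hw]]|[r [a [b [s [t [Hu [Hv Hab]]]]]]]].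
  by have := congr1 size Hw; rewrite size_drop size_cat; lia.
have Hra : y.[size r] = a by rewrite Hu nth_cat ltnn subnn.
have Hrb : y.[dd + size r] = b by rewrite -nth_drop Hv nth_cat ltnn subnn.
have Hr j : j < size r -> y.[j] = y.[dd + j] by rewrite -nth_drop Hv Hu !nth_cat => ->.
have Hneq : a != b by rewrite lt_neqAle in Hab; case/andP: Hab.
case: (ltngtP (size r) e) => Hc.
- by move: Hneq; rewrite -Hra -Hrb Hm // eqxx.
- by move: Hne; rewrite -Hr // eqxx.
- by rewrite -Hc Hra Hrb.
Qed.

Lemma lyndon_unbordered m : 0 < m < n -> exists2 e, m + e < n & y.[m + e] != y.[e].
Proof.
move=> Hm; have [_ /(_ m Hm)] := y_lyndon.
case=> [[w [_ Hw]]|[r [a [b [s [t [Hu [Hv Hab]]]]]]]].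
  by have := congr1 size Hw; rewrite size_drop size_cat; lia.
exists (size r); first by have := congr1 size Hv; rewrite size_drop size_cat /=; lia.
rewrite -nth_drop Hv Hu !nth_cat ltnn subnn /= eq_sym.
by rewrite lt_neqAle in Hab; case/andP: Hab.
Qed.

Definition lcp (m : nat) : nat :=
  find (fun j => y.[m + j] != y.[j]) (iota 0 (n - m)).
Definition brk (m : nat) : nat := m + lcp m.

Lemma brk_ge m : m <= brk m.
Proof. exact: leq_addr. Qed.

Lemma lcp_lt m : 0 < m < n -> lcp m < n - m.
Proof.
move=> Hm; have [e He1 He2] := lyndon_unbordered Hm.
rewrite -[n - m](size_iota 0) -has_find; apply/hasP; exists e => //.
by rewrite mem_iota; lia.
Qed.

Lemma brk_lt m : 0 < m < n -> brk m < n.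
Proof. by move=> /lcp_lt; rewrite /brk; lia. Qed.

Lemma lcp_match m j : j < lcp m -> y.[m + j] = y.[j].
Proof.
move=> Hj; have Hs : lcp m <= n - m.
  by rewrite -[n - m](size_iota 0) find_size.
by have := before_find 0 Hj; rewrite nth_iota ?add0n; [move/negbFE/eqP | lia].
Qed.

Lemma brk_mismatch m : 0 < m < n -> y.[brk m] != y.[lcp m].
Proof.
move=> Hm; have H := lcp_lt Hm.
have Hh : has (fun j => y.[m + j] != y.[j]) (iota 0 (n - m)).
  by rewrite has_find size_iota.
by have := nth_find 0 Hh; rewrite -/(lcp m) nth_iota ?add0n; last lia.
Qed.

Lemma brk_letter_lt m : 0 < m < n -> (y.[lcp m] < y.[brk m])%O.
Proof.
move=> Hm; have H := lcp_lt Hm.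
by apply: lyndon_shift_lt; [lia | rewrite /brk; lia | exact: lcp_match | exact: brk_mismatch].
Qed.

Lemma brk_period m i : 0 < m -> i < brk m -> y.[i] = cyc x0 y m i.
Proof.
rewrite /cyc => Hm; elim/ltn_ind: i => i IH Hi.
have [Him|Hmi] := ltnP i m; first by rewrite modn_small.
have -> : i = m + (i - m) by lia.
rewrite lcp_match; last by rewrite /brk in Hi; lia.
by rewrite IH ?modnDl //; lia.
Qed.

(* Breaks are nested: a shift m' starting before the break of m breaks no
   later.  Otherwise the shift by m' - m would first meet y at position
   brk m - m' with the letter y[lcp m] < y[brk m], against lyndon_shift_lt. *)
Lemma brk_nested m m' : 0 < m -> m < m' -> m' <= brk m -> m' < n -> brk m' <= brk m.
Proof.
move=> H0 H1 H2 H3; have Hmn : 0 < m < n by lia.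
have Ek : brk m = m + lcp m by []; have Ek' : brk m' = m' + lcp m' by [].
have Hfm := lcp_lt Hmn.
rewrite leqNgt; apply/negP => Hlt.
have Hkm : y.[brk m - m'] = y.[brk m].
  by rewrite -(@lcp_match m' (brk m - m')) ?subnKC //; lia.
have Hdd : y.[(m' - m) + (brk m - m')] = y.[lcp m] by congr nth; lia.
have Hmatch j : j < brk m - m' -> y.[(m' - m) + j] = y.[j].
  move=> Hj; rewrite -(@lcp_match m' j); last lia.
  by rewrite -(@lcp_match m (m' - m + j)); [congr nth | ]; lia.
have Hmis : y.[(m' - m) + (brk m - m')] != y.[brk m - m'].
  by rewrite Hdd Hkm eq_sym brk_mismatch.
have := lyndon_shift_lt (dd := m' - m) (e := brk m - m') ltac:(lia) ltac:(lia) Hmatch Hmis.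
by rewrite Hdd Hkm => /lt_trans/(_ (brk_letter_lt Hmn)); rewrite ltxx.
Qed.

(* A prefix with an earlier break is smaller: its periodic stream falls below
   y at its break, while the other one still agrees with y there. *)
Lemma prec_brk_lt a b : 0 < a < n -> 0 < b < n -> brk a < brk b ->
  prec (take a y) (take b y).
Proof.
move=> Ha Hb Hab; apply: (prec_take (x0 := x0)); [lia | lia | left].
apply: (streamlt_via (w := nth x0 y) (K := brk a)).
- by move=> i Hi; rewrite (@brk_period a) //; lia.
- have Hl : lcp a < brk a by rewrite /brk -{1}[lcp a]add0n ltn_add2r; case/andP: Ha.
  rewrite (_ : cyc x0 y a (brk a) = y.[lcp a]); first exact: brk_letter_lt.
  rewrite (@brk_period a (lcp a)) //; last by case/andP: Ha.
  by rewrite /cyc /brk modnDl.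
- by move=> i Hi; rewrite (@brk_period b) //; lia.
Qed.

(* A prefix ending before the break of a shorter prefix is smaller: writing
   dd = m' - m, comparing (y[0..m'))^oo with (y[0..m))^oo beyond m' amounts to
   comparing y with its shift y[dd..] on the first m letters.  By the Lyndon
   property either the shift wins at some g < m, or the two streams coincide. *)
Lemma prec_brk_nested m m' : 0 < m -> m < m' -> m' <= brk m -> m' < n ->
  prec (take m' y) (take m y).
Proof.
move=> H0 H1 H2 H3; set dd := m' - m.
have Per i : i < m' -> y.[i] = cyc x0 y m i.
  by move=> Hi; apply: (@brk_period m) => //; lia.
have Shift j : cyc x0 y m (m' + j) = cyc x0 y m (dd + j).
  by rewrite /cyc (_ : m' + j = m + (dd + j)) ?modnDl //; lia.
have Qper j : cyc x0 y m' (m' + j) = cyc x0 y m' j by rewrite /cyc modnDl.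
have Qlow i : i < m' -> cyc x0 y m' i = y.[i] by move=> Hi; rewrite /cyc modn_small.
set g := find (fun j => y.[dd + j] != y.[j]) (iota 0 m).
have Bef j : j < g -> y.[dd + j] = y.[j].
  move=> Hj; have Hg : g <= m by rewrite -[m](size_iota 0) find_size.
  by have := before_find 0 Hj; rewrite nth_iota ?add0n; [move/negbFE/eqP | lia].
apply: (prec_take (x0 := x0)); [lia | lia |].
have [Hgm|Hmg] := ltnP g m.
- left; exists (m' + g); split.
    move=> i Hi; have [Him'|Hm'i] := ltnP i m'; first by rewrite Qlow // Per.
    have -> : i = m' + (i - m') by lia.
    by rewrite Qper Shift -Per ?Qlow ?Bef //; lia.
  have Hh : has (fun j => y.[dd + j] != y.[j]) (iota 0 m) by rewrite has_find size_iota.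
  have Mis : y.[dd + g] != y.[g].
    by have := nth_find 0 Hh; rewrite -/g nth_iota ?add0n; last lia.
  rewrite Qper Shift -Per ?Qlow; try lia.
  by apply: lyndon_shift_lt => //; lia.
- right; split=> //.
  have Pdd i : cyc x0 y m (dd + i) = cyc x0 y m i.
    have Hi : i %% m < m by rewrite ltn_mod.
    rewrite {1}/cyc -modnDmr -/(cyc x0 y m (dd + i %% m)) -Per; last lia.
    by rewrite Bef //; lia.
  have Pper i : cyc x0 y m i = cyc x0 y m (i %% m').
    rewrite {1}(divn_eq i m') addnC; elim: (i %/ m') => [|q IH]; first by rewrite addn0.
    by rewrite mulSn addnCA Shift Pdd.
  move=> i; rewrite Pper -Per; last by rewrite ltn_mod; lia.
  by [].
Qed.

(* The order in which the algorithm emits prefix lengths: by increasing break,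
   and by decreasing length among prefixes with the same break. *)
Definition emitted_before (a b : nat) : bool :=
  (brk a < brk b) || ((brk a == brk b) && (b < a)).

Lemma emitted_before_irr : irreflexive emitted_before.
Proof. by move=> a; rewrite /emitted_before !ltnn andbF. Qed.

Lemma prec_emitted_before a b : 0 < a < n -> 0 < b < n -> emitted_before a b ->
  prec (take a y) (take b y).
Proof.
move=> Ha Hb /orP [Hlt | /andP [/eqP Heq Hba]]; first exact: prec_brk_lt.
by apply: prec_brk_nested; have := brk_ge a; lia.
Qed.

End LyndonPrefixes.

Section Execution.
Context {d : Order.disp_t} {T : orderType d}.
Variables (P : program) (y : seq T).

Fixpoint steps (t : nat) (s : state) : option state :=
  match t with
  | 0 => Some s
  | t'.+1 => if step P y s is Some s' then steps t' s' else None
  end.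

Lemma steps_add a b s :
  steps (a + b) s = if steps a s is Some s' then steps b s' else None.
Proof. by elim: a s => [|a IH] s //=; case: (step P y s). Qed.

Lemma run_steps t : run P y t = steps t (init_state (size y)).
Proof.
elim: t => [|t IH] //; rewrite -[in RHS]addn1 steps_add -IH /=.
by case: (run P y t) => //= s; case: (step P y s).
Qed.

(* reach s Q: some run of t steps from s ends in a state s' with Q t s';
   the step count t is exposed to Q for time bounds. *)
Definition reach (s : state) (Q : nat -> state -> Prop) : Prop :=
  exists t s', steps t s = Some s' /\ Q t s'.

Lemma reach_now s (Q : nat -> state -> Prop) : Q 0 s -> reach s Q.
Proof. by exists 0, s. Qed.

Lemma reach_step s s1 (Q : nat -> state -> Prop) : step P y s = Some s1 ->
  reach s1 (fun t s' => Q t.+1 s') -> reach s Q.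
Proof. by move=> H [t [s' [H1 H2]]]; exists t.+1, s'; rewrite /= H. Qed.

Lemma reach_seq s (Q1 Q : nat -> state -> Prop) : reach s Q1 ->
  (forall t s', Q1 t s' -> reach s' (fun t' s'' => Q (t + t') s'')) -> reach s Q.
Proof.
move=> [t [s' [H1 H2]]] H; have [t' [s'' [H3 H4]]] := H t s' H2.
by exists (t + t'), s''; rewrite steps_add H1.
Qed.

Lemma reach_mono s (Q Q' : nat -> state -> Prop) :
  (forall t s', Q t s' -> Q' t s') -> reach s Q -> reach s Q'.
Proof. by move=> H [t [s' [H1 H2]]]; exists t, s'; split => //; apply: H. Qed.

End Execution.

(* Registers: R0 = n, R1 = i (scan position),
   R3 = n + stack height (the stack lives in M[n..]), R4 = number of emitted
   lengths (the output lives in M[0..]), R5 = 1, R6-R8 scratch, R9 = 0.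
     for i := 1 to n-1:
       push i;
       while the stack is non-empty, with top t:
         if y[i] = y[i-t] then break;  (* i < brk t *)
         pop t; emit t - 1               (* brk t = i *)                *)
Definition std_prog : program := [::
  (*  0 *) IConst 5 1; IConst 1 1; IAdd 3 0 9;
  (*  3 *) IJlt 1 0 5; IJmp 23;
  (*  5 *) IStore 3 1; IAdd 3 3 5;
  (*  7 *) IJlt 0 3 9; IJmp 21;
  (*  9 *) ISub 6 3 5; ILoad 7 6; ISub 8 1 7; ICmp 6 1 8;
  (* 13 *) IJlt 6 5 16; IJlt 5 6 16; IJmp 21;
  (* 16 *) ISub 8 7 5; IStore 4 8; IAdd 4 4 5; ISub 3 3 5; IJmp 7;
  (* 21 *) IAdd 1 1 5; IJmp 3;
  (* 23 *) IHalt].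

Section Algorithm.
Context {d : Order.disp_t} {T : orderType d}.
Variables (x0 : T) (y : seq T).
Hypothesis y_lyndon : lyndon y.
Local Notation n := (size y).
Local Notation "y .[ i ]" := (nth x0 y i).
Local Notation brk := (brk x0 y).
Local Notation emitted_before := (emitted_before x0 y).

Record scan_inv (i : nat) (st out : seq nat) : Prop := {
  scan_i : 0 < i <= n;
  scan_st : pairwise ltn st;
  scan_stm : forall m, m \in st -> 0 < m < i /\ i <= brk m;
  scan_stc : forall m, 0 < m < i -> i <= brk m -> m \in st;
  scan_out : pairwise emitted_before out;
  scan_outm : forall x, x \in out -> 0 < x < i /\ brk x < i;
  scan_outc : forall m, 0 < m -> brk m < i -> m \in out }.

Record pop_inv (i : nat) (st out : seq nat) : Prop := {
  pop_i : 0 < i < n;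
  pop_st : pairwise ltn st;
  pop_stm : forall m, m \in st -> 0 < m <= i /\ i <= brk m;
  pop_stc : forall m, 0 < m <= i -> i < brk m -> m \in st;
  pop_out : pairwise emitted_before out;
  pop_outm : forall x, x \in out -> 0 < x <= i /\ brk x <= i;
  pop_outlt : forall x, x \in out -> brk x = i -> forall m, m \in st -> m < x;
  pop_outc : forall m, 0 < m -> brk m < i -> m \in out;
  pop_all : forall m, 0 < m <= i -> brk m = i -> m \in st \/ m \in out }.

Lemma scan_push i st out : scan_inv i st out -> i < n -> pop_inv i (rcons st i) out.
Proof.
case=> Hi Hst Hstm Hstc Hout Houtm Houtc Hin; have Hki := brk_ge x0 y i.
constructor => //.
- lia.
- by rewrite pairwise_rcons Hst andbT; apply/allP => m /Hstm; lia.
- by move=> m; rewrite mem_rcons inE => /orP [/eqP ->|/Hstm]; lia.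
- move=> m Hm Hk; rewrite mem_rcons inE; have [Hmi|Hmi] := ltnP m i.
    by rewrite Hstc ?orbT //; lia.
  by rewrite (_ : m = i) ?eqxx //; lia.
- by move=> x /Houtm; lia.
- by move=> x /Houtm; lia.
- move=> m Hm Hk; left; rewrite mem_rcons inE; have [Hmi|Hmi] := ltnP m i.
    by rewrite Hstc ?orbT //; lia.
  by rewrite (_ : m = i) ?eqxx //; lia.
Qed.

Lemma pop_exit_empty i out : pop_inv i [::] out -> scan_inv i.+1 [::] out.
Proof.
case=> Hi Hst Hstm Hstc Hout Houtm Houtlt Houtc Hall.
constructor => //; first lia.
move=> m Hm Hk; have [Hkm|Hkm] := ltnP (brk m) i; first exact: Houtc.
have Hg := brk_ge x0 y m.
by case: (Hall m ltac:(lia) ltac:(lia)).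
Qed.

(* Nesting of breaks: if the top of the stack breaks after i, so does every
   stack element below it. *)
Lemma stack_above i st t out : pop_inv i (rcons st t) out -> i < brk t ->
  forall m, m \in rcons st t -> i < brk m.
Proof.
case=> Hi Hst Hstm Hstc Hout Houtm Houtlt Houtc Hall Hkt m.
rewrite mem_rcons inE => /orP [/eqP -> //|Hm].
have Hmt : m < t by move: Hst; rewrite pairwise_rcons => /andP [/allP /(_ m Hm)].
have [H1 H2] := Hstm m ltac:(by rewrite mem_rcons inE Hm orbT).
have [H3 H4] := Hstm t ltac:(by rewrite mem_rcons inE eqxx).
rewrite ltn_neqAle H2 andbT; apply/eqP => Ekm.
by have := brk_nested (x0 := x0) y_lyndon (m := m) (m' := t) ltac:(lia) Hmt ltac:(lia) ltac:(lia); lia.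
Qed.

Lemma pop_exit_match i st t out : pop_inv i (rcons st t) out -> i < brk t ->
  scan_inv i.+1 (rcons st t) out.
Proof.
move=> HI Hkt; have Hgt := stack_above HI Hkt.
case: HI => Hi Hst Hstm Hstc Hout Houtm Houtlt Houtc Hall.
constructor => //; first lia.
- by move=> m Hm; have := Hstm m Hm; have := Hgt m Hm; lia.
- move=> m Hm Hk; have [Hkm|Hkm] := ltnP (brk m) i; first exact: Houtc.
  have Hg := brk_ge x0 y m.
  by case: (Hall m ltac:(lia) ltac:(lia)) => // /Hgt; lia.
Qed.

Lemma pop_top i st t out : pop_inv i (rcons st t) out -> brk t <= i ->
  pop_inv i st (rcons out t) /\ brk t = i.
Proof.
case=> Hi Hst Hstm Hstc Hout Houtm Houtlt Houtc Hall Hkt.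
have [Ht1 Ht2] := Hstm t ltac:(by rewrite mem_rcons inE eqxx).
have Ekt : brk t = i by lia.
have Hlt m : m \in st -> m < t.
  by move=> Hm; move: Hst; rewrite pairwise_rcons => /andP [/allP /(_ m Hm)].
have Hsub m : m \in st -> m \in rcons st t by move=> Hm; rewrite mem_rcons inE Hm orbT.
split => //; constructor => //.
- by move: Hst; rewrite pairwise_rcons => /andP [].
- by move=> m /Hsub /Hstm.
- move=> m Hm Hk; move: (Hstc m Hm Hk); rewrite mem_rcons inE => /orP [/eqP E|//].
  by move: Hk; rewrite E; lia.
- rewrite pairwise_rcons Hout andbT; apply/allP => x Hx.
  have [H1 H2] := Houtm x Hx; rewrite /emitted_before Ekt.
  case: (ltnP (brk x) i) => //= Hkx.
  have Ekx : brk x = i by lia.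
  by rewrite Ekx eqxx /=; apply: (Houtlt x Hx Ekx); rewrite mem_rcons inE eqxx.
- by move=> x; rewrite mem_rcons inE => /orP [/eqP ->|/Houtm //]; lia.
- move=> x; rewrite mem_rcons inE => /orP [/eqP -> _ m /Hlt //|Hx Hkx m Hm].
  exact/(Houtlt x Hx Hkx)/Hsub.
- by move=> m Hm Hk; rewrite mem_rcons inE Houtc ?orbT.
- move=> m Hm Hk; case: (Hall m Hm Hk).
    rewrite mem_rcons inE => /orP [/eqP ->|->]; last by left.
    by right; rewrite mem_rcons inE eqxx.
  by move=> Hm2; right; rewrite mem_rcons inE Hm2 orbT.
Qed.

(* The output area M[0..] never reaches the stack area M[n..]. *)
Lemma pop_out_small i st out : pop_inv i st out -> size out < n.
Proof.
case=> Hi Hst Hstm Hstc Hout Houtm Houtlt Houtc Hall.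
have : size out <= size (iota 1 i).
  apply: uniq_leq_size; first exact: pairwise_uniq (emitted_before_irr x0 y) Hout.
  by move=> x /Houtm [H1 _]; rewrite mem_iota; lia.
by rewrite size_iota; lia.
Qed.

Lemma letter_eq_brk i t : 0 < t <= i -> i < n -> i <= brk t ->
  (y.[i - t] == y.[i]) = (i < brk t).
Proof.
move=> Ht Hi Hk; have Htn : 0 < t < n by lia.
have Ek : brk t = t + lcp x0 y t by [].
have [Hc|Hc] := ltnP i (brk t).
  apply/eqP; rewrite -(@lcp_match _ _ x0 y t (i - t)); last lia.
  by rewrite subnKC //; lia.
have -> : i - t = lcp x0 y t by lia.
have -> : i = brk t by lia.
by apply/negbTE; rewrite eq_sym brk_mismatch.
Qed.

(* How the abstract state (i, st, out) is laid out in registers and memory;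
   lengths m are emitted as the positions m - 1. *)
Record encodes (i : nat) (st out : seq nat) (R M : nat -> nat) : Prop := {
  enc_n : R 0 = n;
  enc_i : R 1 = i;
  enc_sp : R 3 = n + size st;
  enc_op : R 4 = size out;
  enc_one : R 5 = 1;
  enc_st : forall j, j < size st -> M (n + j) = nth 0 st j;
  enc_out : forall j, j < size out -> M j = (nth 0 out j).-1 }.

Local Notation reach := (reach std_prog y).
Arguments upd f k v i /.
Ltac exec := apply: reach_step; [rewrite /Defs.step /=; reflexivity|].
Ltac exec_by H := apply: reach_step; [rewrite /Defs.step /= H; reflexivity|].

Lemma onth_in i : i < n -> onth y i = Some y.[i].
Proof. by move=> Hi; rewrite onthE (nth_map x0). Qed.

Lemma run_pop i st t out R R' M : encodes i (rcons st t) out R M -> size out < n ->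
  R' 0 = R 0 -> R' 1 = R 1 -> R' 3 = R 3 -> R' 4 = R 4 -> R' 5 = R 5 -> R' 7 = t ->
  reach (State 16 R' M) (fun tt s => tt = 5 /\ pc s = 7 /\
     encodes i st (rcons out t) (reg s) (Defs.mem s)).
Proof.
case=> HR0 HR1 HR3 HR4 HR5 Hst Hout Hsz H0 H1 H3 H4 H5 H7.
do 5 exec; apply: reach_now; do 2 split => //.
constructor => /=.
- by rewrite H0.
- by rewrite H1.
- by rewrite H3 H5 HR3 HR5 size_rcons; lia.
- by rewrite H4 H5 HR4 HR5 size_rcons addn1.
- by rewrite H5.
- move=> j Hj; rewrite H4 HR4 ifF; last by apply/eqP; lia.
  by rewrite Hst ?size_rcons ?nth_rcons ?Hj //; lia.
- move=> j; rewrite size_rcons nth_rcons H4 H7 H5 HR4 HR5 subn1 => Hj.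
  have [Hjo|Hjo] := ltnP j (size out); first by rewrite ifF ?Hout //; apply/eqP; lia.
  by rewrite (_ : j = size out) ?eqxx //; lia.
Qed.

Lemma run_loop_body i st t out R M : pop_inv i (rcons st t) out ->
  encodes i (rcons st t) out R M ->
  reach (State 7 R M) (fun tt s =>
    (tt <= 8 /\ pc s = 21 /\ scan_inv i.+1 (rcons st t) out /\
       encodes i (rcons st t) out (reg s) (Defs.mem s)) \/
    (tt <= 12 /\ pc s = 7 /\ pop_inv i st (rcons out t) /\
       encodes i st (rcons out t) (reg s) (Defs.mem s))).
Proof.
move=> HI HC; have [HR0 HR1 HR3 HR4 HR5 _ _] := HC.
have Hne : (R 0 < R 3) = true by rewrite HR0 HR3 size_rcons; lia.
exec_by Hne; do 3 exec.
have -> : M (R 3 - R 5) = t.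
  rewrite HR3 HR5 size_rcons addnS subn1 /= (enc_st HC) ?size_rcons //.
  by rewrite nth_rcons ltnn eqxx.
have Htin : t \in rcons st t by rewrite mem_rcons mem_head.
have [Ht1 Ht2] := pop_stm HI Htin.
have Hin := pop_i HI.
have Hcmp : cmp_letters y (R 1) (R 1 - t) =
    Some (if (y.[i] < y.[i - t])%O then 0 else if y.[i] == y.[i - t] then 1 else 2).
  by rewrite HR1 /cmp_letters !onth_in //; lia.
have Heq := letter_eq_brk (i := i) (t := t) ltac:(lia) ltac:(lia) Ht2.
have [Hc|Hc] := ltnP i (brk t).
  rewrite Hc in Heq; move/eqP: Heq => Heq.
  rewrite Heq ltxx eqxx /= in Hcmp; exec_by Hcmp; exec_by HR5; exec_by HR5; exec.
  apply: reach_now; left; do 2 split => //; split; first exact: pop_exit_match.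
  by case: HC => *; constructor.
have [HI' Ekt] := pop_top HI Hc.
rewrite Ekt ltnn in Heq.
have Hsz := pop_out_small HI'; rewrite size_rcons in Hsz.
have Hpop (R' : nat -> nat) tt0 : tt0 <= 7 -> R' 0 = R 0 -> R' 1 = R 1 -> R' 3 = R 3 ->
    R' 4 = R 4 -> R' 5 = R 5 -> R' 7 = t ->
    reach (State 16 R' M) (fun tt s => tt0 + tt <= 12 /\ pc s = 7 /\
      pop_inv i st (rcons out t) /\ encodes i st (rcons out t) (reg s) (Defs.mem s)).
  move=> Htt H0 H1 H3 H4 H5 H7.
  apply: reach_mono (run_pop HC _ H0 H1 H3 H4 H5 H7); last lia.
  by move=> tt s [-> [Hpc Henc]]; split; [lia | exact: (conj Hpc (conj HI' Henc))].
(* both strict outcomes of the comparison continue at instruction 16 *)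
case Hlt: (y.[i] < y.[i - t])%O.
  rewrite Hlt in Hcmp; exec_by Hcmp; exec_by HR5.
  by apply: reach_mono (Hpop _ 6 _ _ _ _ _ _ _) => //= tt s H; right.
have Hneq : (y.[i] == y.[i - t]) = false by rewrite eq_sym Heq.
rewrite Hlt Hneq in Hcmp; exec_by Hcmp; exec_by HR5; exec_by HR5.
by apply: reach_mono (Hpop _ 7 _ _ _ _ _ _ _) => //= tt s H; right.
Qed.

Lemma encodes_push i st out R M : encodes i st out R M -> size out < n ->
  encodes i (rcons st i) out (upd R 3 (R 3 + R 5)) (upd M (R 3) (R 1)).
Proof.
case=> HR0 HR1 HR3 HR4 HR5 Hst Hout Hsz; constructor => /=; rewrite ?HR3 ?HR5 //.
- by rewrite size_rcons addn1 addnS.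
- move=> j; rewrite size_rcons nth_rcons HR1 => Hj.
  have [Hjs|Hjs] := ltnP j (size st); first by rewrite ifF ?Hst //; apply/eqP; lia.
  by rewrite (_ : j = size st) ?eqxx //; lia.
- by move=> j Hj; rewrite ifF ?Hout //; apply/eqP; lia.
Qed.

(* The whole popping loop of iteration i ends at instruction 21 in a state
   satisfying the invariant for iteration i+1; each pop costs at most 12
   steps, and the final test at most 8 more. *)
Lemma run_pop_loop i st : forall out R M, pop_inv i st out ->
  encodes i st out R M ->
  reach (State 7 R M) (fun tt s => exists st' out', pc s = 21 /\
    scan_inv i.+1 st' out' /\ encodes i st' out' (reg s) (Defs.mem s) /\
    tt + 12 * size st' <= 12 * size st + 8).
Proof.
elim/last_ind: st => [|st t IH] out R M HI HC.
  have Hempty : (R 0 < R 3) = false by rewrite (enc_n HC) (enc_sp HC) addn0 ltnn.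
  exec_by Hempty; exec; apply: reach_now.
  by exists [::], out; split => //; split; [exact: pop_exit_empty | split].
apply: reach_seq; first exact: run_loop_body HI HC.
move=> tt s [[Htt [Hpc [HO HC']]]|[Htt [Hpc [HI' HC']]]].
  apply: reach_now; exists (rcons st t), out; do 3 (split => //).
  by rewrite addn0; lia.
case: s Hpc HC' => p R' M' /= -> HC'.
apply: reach_mono (IH _ _ _ HI' HC') => tt' s' [st' [out' [Hpc' [HO' [HC'' Htt']]]]].
exists st', out'; do 3 (split => //).
by rewrite size_rcons; lia.
Qed.

(* At the end of the scan, out is all of 1..n-1 in emission order, so the
   output area holds the prefix standard permutation. *)
Lemma encodes_final st out R M : scan_inv n st out -> encodes n st out R M ->
  prefix_std_perm y (mkseq M n.-1).
Proof.
move=> HO HC; have Hn := scan_i HO.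
have Hmem : out =i iota 1 n.-1.
  move=> x; rewrite mem_iota; apply/idP/idP.
    by move/(scan_outm HO) => [H1 _]; lia.
  by move=> Hx; apply: (scan_outc HO); [lia | apply: (brk_lt x0 y_lyndon); lia].
have Hperm : perm_eq out (iota 1 n.-1).
  apply: uniq_perm Hmem; last exact: iota_uniq.
  exact: pairwise_uniq (emitted_before_irr x0 y) (scan_out HO).
have Hsz : size out = n.-1 by rewrite (perm_size Hperm) size_iota.
have -> : mkseq M n.-1 = map predn out.
  apply: (eq_from_nth (x0 := 0)); first by rewrite size_mkseq size_map Hsz.
  move=> j; rewrite size_mkseq => Hj.
  by rewrite nth_mkseq // (nth_map 0) ?Hsz // (enc_out HC) ?Hsz.
have Hpos j : j < size out -> 0 < nth 0 out j < n.
  move=> Hj; have [Hx _] := scan_outm HO (mem_nth 0 Hj).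
  by move: Hx; set x := nth 0 out j; lia.
split.
  rewrite (_ : iota 0 n.-1 = map predn (iota 1 n.-1)); first exact: perm_map.
  by rewrite (iotaDl 1) -map_comp map_id_in.
move=> j; rewrite size_map => Hj.
have H1 := Hpos j (ltnW Hj); have H2 := Hpos j.+1 Hj.
rewrite !(nth_map 0) ?prednK //; try lia.
apply: prec_emitted_before => //.
have /pairwiseP Hord := scan_out HO.
by apply: Hord; rewrite ?inE //; lia.
Qed.

Lemma run_scan r : forall i st out R M, n - i = r -> scan_inv i st out ->
  encodes i st out R M ->
  reach (State 3 R M) (fun tt s => halted std_prog s /\
    prefix_std_perm y (output y s) /\ tt <= 25 * (n - i) + 12 * size st + 2).
Proof.
elim: r => [|r IH] i st out R M Hr HO HC.
  have Hi : i = n by have := scan_i HO; lia.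
  have Hdone : (R 1 < R 0) = false by rewrite (enc_n HC) (enc_i HC) Hi ltnn.
  exec_by Hdone; exec; apply: reach_now.
  split=> //; split; last lia.
  by rewrite /output /=; subst i; exact: encodes_final HO HC.
have Hin : i < n by lia.
have Hmore : (R 1 < R 0) = true by rewrite (enc_n HC) (enc_i HC).
exec_by Hmore; exec; exec.
have HI := scan_push HO Hin.
apply: reach_seq; first exact: run_pop_loop HI (encodes_push HC (pop_out_small HI)).
move=> tt1 [p1 R1 M1] [st' [out' [/= -> [HO' [HC' Htt]]]]].
exec; exec.
have HC'' : encodes i.+1 st' out' (upd R1 1 (R1 1 + R1 5)) M1.
  by case: HC' => *; constructor => //=; lia.
apply: reach_mono (IH i.+1 st' out' _ M1 ltac:(lia) HO' HC'') => tt2 s2 [Hh [Hp Ht]].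
by split=> //; split=> //; rewrite size_rcons in Htt; lia.
Qed.

Lemma std_prog_correct : 2 <= n -> exists t s, t <= 30 * n /\
  run std_prog y t = Some s /\ halted std_prog s /\ prefix_std_perm y (output y s).
Proof.
move=> Hn.
have HO : scan_inv 1 [::] [::].
  by constructor => //; try lia; move=> m Hm Hk; have := brk_ge x0 y m; lia.
suff [t [s [Hs [Hh [Hp Ht]]]]] : reach (init_state n) (fun tt s =>
    halted std_prog s /\ prefix_std_perm y (output y s) /\ tt <= 30 * n).
  by exists t, s; rewrite run_steps.
rewrite /init_state; do 3 exec.
apply: reach_mono (run_scan (r := n - 1) (i := 1) _ HO _) => //.
by move=> tt s [Hh [Hp Ht]]; do 2 split => //; rewrite /= in Ht; lia.
Qed.

End Algorithm.

Theorem mainTheorem3 :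
  exists (P : program) (C : nat),
    forall (d : Order.disp_t) (T : orderType d) (y : seq T),
      lyndon y -> 2 <= size y ->
      exists (t : nat) (s : state),
        t <= C * size y /\ run P y t = Some s /\ halted P s /\
        prefix_std_perm y (output y s).
Proof.
exists std_prog, 30 => d T [|x0 y'] Hly Hn //.
exact: (@std_prog_correct d T x0 (x0 :: y') Hly Hn).
Qed.
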